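(* Let $k,m,n\in\mathbb{N}$ with $n=k>m=1$, and let $b,c\in\mathbb{R}$ with $b\neq\pm1$. Let $$q(z)=bz^k+\overline{z}^n+c\,\overline{z}^m+z=\big(bz^k+z\big)+\overline{\big(z^n+cz^m\big)},$$ with dilatation function $$\omega(z)=\frac{(z^n+cz^m)'}{(bz^k+z)'}=\frac{nz^{n-1}+cmz^{m-1}}{bkz^{k-1}+1}.$$ Let $z$ be a point at which $\omega(z)$ is defined and such that $z^k\overline{z}$ is a pure imaginary number. Then $|\omega(z)|=1$ if and only if $$|z|=\left(\frac{1}{k}\right)^{\frac{1}{k-1}}\left(\frac{c^2-1}{b^2-1}\right)^{\frac{1}{2k-2}}.$$
   Context: $\overline{z}$ denotes the complex conjugate of $z$. For a harmonic polynomial $f=h+\overline{g}$ with $h,g$ analytic, its dilatation is $\omega=g'/h'$, defined where $h'\neq 0$. *)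

From HB Require Import structures.
From mathcomp Require Import all_boot all_order all_algebra.
From mathcomp Require Import complex.
From mathcomp Require Import all_classical all_reals all_analysis.
Set Implicit Arguments. Unset Strict Implicit. Unset Printing Implicit Defensive.
Import Order.TTheory GRing.Theory Num.Theory.
Local Open Scope ring_scope.
Local Open Scope complex_scope.

Definition hpoly (R : realType) (b : R) (k : nat) : {poly R[i]} :=
  (b%:C)%:P * 'X^k + 'X.
Definition gpoly (R : realType) (c : R) (n m : nat) : {poly R[i]} :=
  'X^n + (c%:C)%:P * 'X^m.

(* dilatation omega = g'/h' (meaningful where h' <> 0) *)
Definition dilatation (R : realType) (b c : R) (k n m : nat) (z : R[i]) : R[i] :=
  ((gpoly c n m)^`()).[z] / ((hpoly b k)^`()).[z].

From HB Require Import structures.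
From mathcomp Require Import all_boot all_order all_algebra.
From mathcomp Require Import complex.
From mathcomp Require Import all_classical all_reals all_analysis.
From mathcomp Require Import ring.
Import Order.TTheory GRing.Theory Num.Theory.
Local Open Scope ring_scope.
Local Open Scope complex_scope.

(* With n = k and m = 1 the dilatation is (k w + c) / (b k w + 1) for w = z^(k-1).
   Since z^k conj z = |z|^2 w, the hypothesis makes w = i q purely imaginary with
   q^2 = |z|^(2k-2), so |omega| = 1 reads c^2 + k^2 q^2 = 1 + b^2 k^2 q^2, i.e.
   (c^2 - 1) / (b^2 - 1) = k^2 |z|^(2k-2); solve for |z|. *)

Lemma horner_deriv_hpoly (R : realType) (b : R) (k : nat) (z : R[i]) :
  ((hpoly b k)^`()).[z] = b%:C * k%:R * z ^+ k.-1 + 1.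
Proof.
rewrite /hpoly derivD mul_polyC derivZ derivXn derivX.
by rewrite hornerD hornerZ hornerMn hornerXn hornerC -mulr_natl mulrA.
Qed.

Lemma horner_deriv_gpoly (R : realType) (c : R) (n m : nat) (z : R[i]) :
  ((gpoly c n m)^`()).[z] = n%:R * z ^+ n.-1 + c%:C * m%:R * z ^+ m.-1.
Proof.
rewrite /gpoly derivD mul_polyC derivZ !derivXn.
by rewrite hornerD hornerZ !hornerMn !hornerXn -mulrA !mulr_natl.
Qed.

Lemma dilatation_k_k_1 (R : realType) (b c : R) (k : nat) (z : R[i]) :
  dilatation b c k k 1 z = (k%:R * z ^+ k.-1 + c%:C) / (b%:C * k%:R * z ^+ k.-1 + 1).
Proof. by rewrite /dilatation horner_deriv_gpoly horner_deriv_hpoly expr0 !mulr1. Qed.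

Lemma Re_exprS_eq0_of_Re_exprSS_mulJ (R : rcfType) (j : nat) (z : R[i]) :
  Re (z ^+ j.+2 * z^*) = 0 -> complex.Re (z ^+ j.+1) = 0.
Proof.
move=> /eqP; rewrite -complexRe fmorph_eq0 => /eqP.
have [-> _ | z0] := eqVneq z 0; first by rewrite expr0n.
have nz0 : (complex.Re z ^+ 2 + complex.Im z ^+ 2)%:C != 0.
  by rewrite add_Re2_Im2 expf_neq0 ?normr_eq0.
rewrite exprSr -mulrA -sqr_normc -add_Re2_Im2.
move: nz0; rewrite fmorph_eq0; case: (z ^+ j.+1) => p q /= nz0.
by rewrite mulr0 subr0 => /eqP; rewrite mulf_eq0 (negPf nz0) orbF => /eqP.
Qed.

Lemma sqr_Im_expr (R : rcfType) (n : nat) (z : R[i]) :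
  complex.Re (z ^+ n) = 0 -> (complex.Im (z ^+ n) ^+ 2)%:C = `|z| ^+ (2 * n).
Proof. by rewrite mulnC exprM -normrX -add_Re2_Im2 => ->; rewrite expr0n add0r. Qed.

Lemma sqr_norm_complex (R : rcfType) (a b : R) : `|a +i* b| ^+ 2 = (a ^+ 2 + b ^+ 2)%:C.
Proof. exact: esym (add_Re2_Im2 (a +i* b)). Qed.

Lemma norm_complex_eq (R : rcfType) (a b c d : R) :
  `|a +i* b| = `|c +i* d| <-> a ^+ 2 + b ^+ 2 = c ^+ 2 + d ^+ 2.
Proof.
split=> [E | E]; first by apply: complexI; rewrite -!sqr_norm_complex E.
by apply/eqP; rewrite -(eqrXn2 (_ : 0 < 2)%N) // !sqr_norm_complex E.
Qed.

Lemma normf_div_eq1 (F : numFieldType) (x y : F) :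
  y != 0 -> `|x / y| = 1 <-> `|x| = `|y|.
Proof.
move=> y0; have ny0 : `|y| != 0 by rewrite normr_eq0.
rewrite normf_div; split=> [E | ->]; last exact: divff.
by rewrite -(divfK ny0 `|x|) E mul1r.
Qed.

Lemma norm_imaginary_ratio_eq1 (R : rcfType) (b c K q : R) :
  `|(K%:C * (0 +i* q) + c%:C) / (b%:C * K%:C * (0 +i* q) + 1)| = 1 <->
  c ^+ 2 + (K * q) ^+ 2 = 1 + (b * K * q) ^+ 2.
Proof.
have -> : K%:C * (0 +i* q) + c%:C = c +i* (K * q) by simpc.
have -> : b%:C * K%:C * (0 +i* q) + 1 = 1 +i* (b * K * q) by simpc.
have D0 : 1 +i* (b * K * q) != 0 by rewrite eq_complex /= oner_eq0.
apply: iff_trans (normf_div_eq1 _ _ _ D0) _.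
by apply: iff_trans (norm_complex_eq _ _ _ _ _) _; rewrite expr1n.
Qed.

Lemma sqr_sum_eq_iff_ratio (F : fieldType) (b c K q : F) : b ^+ 2 != 1 ->
  c ^+ 2 + (K * q) ^+ 2 = 1 + (b * K * q) ^+ 2 <->
  (c ^+ 2 - 1) / (b ^+ 2 - 1) = K ^+ 2 * q ^+ 2.
Proof.
move=> b2; have D0 : b ^+ 2 - 1 != 0 by rewrite subr_eq0.
have E : c ^+ 2 + (K * q) ^+ 2 - (1 + (b * K * q) ^+ 2) =
         c ^+ 2 - 1 - K ^+ 2 * q ^+ 2 * (b ^+ 2 - 1) by ring.
split=> H.
  by apply: (mulIf D0); rewrite divfK //; apply/eqP; rewrite -subr_eq0 -E H subrr.
by apply/eqP; rewrite -subr_eq0 E -H divfK // subrr.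
Qed.

Lemma powR_natV_expr (R : realType) (a : R) (n : nat) :
  0 <= a -> (0 < n)%N -> (a `^ n%:R^-1) ^+ n = a.
Proof.
move=> a0 n0; rewrite -powR_mulrn ?powR_ge0 // -powRrM mulVf ?powRr1 //.
by rewrite pnatr_eq0 -lt0n.
Qed.

Lemma eq_mul_expr_iff_powR (R : realType) (n : nat) (K Q r : R) :
  (0 < n)%N -> 0 < K -> 0 <= r ->
  Q = K ^+ 2 * r ^+ (2 * n) <->
  0 <= Q /\ r = K^-1 `^ n%:R^-1 * Q `^ (2 * n)%:R^-1.
Proof.
move=> n0 K0 r0; have n20 : (0 < 2 * n)%N by rewrite muln_gt0.
have KE : (K^-1 `^ n%:R^-1) ^+ (2 * n) = K ^- 2.
  by rewrite mulnC exprM powR_natV_expr ?invr_ge0 ?(ltW K0) // exprVn.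
have K2 : K ^+ 2 != 0 by rewrite expf_neq0 ?gt_eqF.
split=> [QE | [Q0 ->]].
  have Q0 : 0 <= Q by rewrite QE mulr_ge0 ?sqr_ge0 ?exprn_ge0.
  split=> //; apply/eqP; rewrite -(eqrXn2 n20) ?mulr_ge0 ?powR_ge0 //.
  by rewrite exprMn KE powR_natV_expr // QE mulrA mulVf ?mul1r.
by rewrite exprMn KE powR_natV_expr // mulrA divff ?mul1r.
Qed.

Theorem theorem3p8 (R : realType) (k m n : nat) (b c : R) (z : R[i]) :
  n = k -> (m < k)%N -> m = 1%N ->
  b != 1 -> b != -1 ->
  ((hpoly b k)^`()).[z] != 0 ->
  Re (z ^+ k * (z^*)%C) = 0 ->
  (`|dilatation b c k n m z| = 1 <->
   (0 <= (c ^+ 2 - 1) / (b ^+ 2 - 1) /\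
    `|z| = ((k%:R^-1 : R) `^ ((k.-1)%:R^-1)
            * ((c ^+ 2 - 1) / (b ^+ 2 - 1)) `^ (((2 * k - 2)%N)%:R^-1))%:C)).
Proof.
move=> -> lt_mk m1; subst m; case: k lt_mk => [|[|j]] // _ b1 bN1 _ Re_zkJ.
have Re_w := Re_exprS_eq0_of_Re_exprSS_mulJ _ _ _ Re_zkJ.
have w_imag : z ^+ j.+1 = 0 +i* complex.Im (z ^+ j.+1).
  by move: Re_w; case: (z ^+ j.+1) => p q /= ->.
have [r r0 norm_z] : exists2 r : R, 0 <= r & `|z| = r%:C.
  by exists (Num.sqrt (complex.Re z ^+ 2 + complex.Im z ^+ 2)); rewrite ?sqrtr_ge0 -?normc_def.
have Im_w2 : complex.Im (z ^+ j.+1) ^+ 2 = r ^+ (2 * j.+1).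
  by apply: complexI; rewrite sqr_Im_expr // norm_z rmorphXn.
rewrite dilatation_k_k_1 /= w_imag -(rmorph_nat (real_complex R) j.+2).
rewrite (_ : (2 * j.+2 - 2)%N = 2 * j.+1); last by rewrite mulnS addKn.
apply: iff_trans (norm_imaginary_ratio_eq1 _ _ _ _ _) _.
apply: iff_trans (sqr_sum_eq_iff_ratio _ _ _ _ _ _) _.
  by rewrite sqrf_eq1 negb_or b1.
rewrite Im_w2 norm_z.
apply: iff_trans (eq_mul_expr_iff_powR _ _ _ _ _ (ltn0Sn j) (ltr0Sn _ _) r0) _.
by split=> -[Q0 E]; split=> //; [rewrite E | exact: complexI E].
Qed.
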